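(* Let $\theta_1,\theta_2,\theta_3\in\mathbb R$ and for $c_1,c_2,c_3\ge0$ with $c_1+c_2+c_3=1$ let $y(c_1,c_2,c_3)=\sum_{1\le k<j\le3}c_jc_k\sin^2\frac{\theta_j-\theta_k}{2}$. (i) If $\sin^2\frac{\theta_1-\theta_2}{2}\sin^2\frac{\theta_2-\theta_3}{2}\sin^2\frac{\theta_3-\theta_1}{2}>0$ and the vector $$\begin{bmatrix}\cos\frac{\theta_2-\theta_3}{2}\csc\frac{\theta_1-\theta_2}{2}\csc\frac{\theta_1-\theta_3}{2}\\ \cos\frac{\theta_1-\theta_3}{2}\csc\frac{\theta_2-\theta_1}{2}\csc\frac{\theta_2-\theta_3}{2}\\ \cos\frac{\theta_1-\theta_2}{2}\csc\frac{\theta_3-\theta_1}{2}\csc\frac{\theta_3-\theta_2}{2}\end{bmatrix}$$ has non-negative components, then $\max y=\frac14$. (ii) Otherwise $\max y=\frac14\max\{\sin^2\frac{\theta_1-\theta_2}{2},\sin^2\frac{\theta_1-\theta_3}{2},\sin^2\frac{\theta_2-\theta_3}{2}\}$. Here the maximum is over all $c_1,c_2,c_3\ge0$ with $c_1+c_2+c_3=1$. *)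

From Stdlib Require Import Reals Lra.
Open Scope R_scope.

Definition s2 (a b : R) : R := (sin ((a - b) / 2)) ^ 2.

Definition csc (x : R) : R := / sin x.

Definition simplex3 (c1 c2 c3 : R) : Prop :=
  0 <= c1 /\ 0 <= c2 /\ 0 <= c3 /\ c1 + c2 + c3 = 1.

Definition yfun (t1 t2 t3 c1 c2 c3 : R) : R :=
  c2 * c1 * s2 t2 t1 + c3 * c1 * s2 t3 t1 + c3 * c2 * s2 t3 t2.

Definition is_max_y (t1 t2 t3 m : R) : Prop :=
  (exists c1 c2 c3, simplex3 c1 c2 c3 /\ yfun t1 t2 t3 c1 c2 c3 = m) /\
  (forall c1 c2 c3, simplex3 c1 c2 c3 -> yfun t1 t2 t3 c1 c2 c3 <= m).

Definition case_i (t1 t2 t3 : R) : Prop :=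
  s2 t1 t2 * s2 t2 t3 * s2 t3 t1 > 0 /\
  0 <= cos ((t2 - t3) / 2) * csc ((t1 - t2) / 2) * csc ((t1 - t3) / 2) /\
  0 <= cos ((t1 - t3) / 2) * csc ((t2 - t1) / 2) * csc ((t2 - t3) / 2) /\
  0 <= cos ((t1 - t2) / 2) * csc ((t3 - t1) / 2) * csc ((t3 - t2) / 2).

From Stdlib Require Import Reals Lra.
Open Scope R_scope.

(* Put u_i = (cos t_i, sin t_i) on the unit circle. Since 4 s2 t_j t_k = |u_j - u_k|^2,
   Lagrange's identity gives 4 y(c) = 1 - |c1 u1 + c2 u2 + c3 u3|^2, so y <= 1/4 with
   equality exactly when the weights put the centroid at the circumcentre 0.
   With A = s2 t1 t2, B = s2 t2 t3, C = s2 t1 t3 (squared half-chords), the circumcentre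
   has barycentric weights (A + C - B) / (4 A C), ...; these are half the vector in (i),
   and they are non-negative iff the triangle u1 u2 u3 is non-obtuse.  If it is obtuse,
   say B >= A + C, the same identity with the signed weights (c1, c2 - 1/2, c3 - 1/2)
   gives y <= B / 4, which is attained at the midpoint c = (0, 1/2, 1/2). *)

Lemma cos2_add_sin2 x : cos x ^ 2 + sin x ^ 2 = 1.
Proof. pose proof (sin2_cos2 x) as h. unfold Rsqr in h. lra. Qed.

Lemma s2_ge0 a b : 0 <= s2 a b.
Proof. apply pow2_ge_0. Qed.

Lemma s2_sym a b : s2 a b = s2 b a.
Proof.
  unfold s2. replace ((b - a) / 2) with (- ((a - b) / 2)) by field.
  rewrite sin_neg. ring.
Qed.

Lemma s2_pos_sin_neq0 a b : 0 < s2 a b -> sin ((a - b) / 2) <> 0.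
Proof. unfold s2. intros h e. rewrite e in h. lra. Qed.

Lemma s2_cos_sin a b : s2 a b = (1 - (cos a * cos b + sin a * sin b)) / 2.
Proof.
  unfold s2. rewrite <- cos_minus.
  replace (a - b) with (2 * ((a - b) / 2)) at 2 by field.
  rewrite cos_2a_sin. field.
Qed.

(* The law of cosines in the inscribed triangle u_a u_b u_c, in half-angles. *)
Lemma sin_sin_cos_half a b c :
  2 * sin ((a - b) / 2) * sin ((a - c) / 2) * cos ((b - c) / 2)
  = s2 a b + s2 a c - s2 b c.
Proof.
  unfold s2.
  replace ((b - c) / 2) with ((a - c) / 2 - (a - b) / 2) by field.
  set (p := (a - b) / 2). set (q := (a - c) / 2).
  rewrite cos_minus, sin_minus.
  pose proof (cos2_add_sin2 p) as hp. pose proof (cos2_add_sin2 q) as hq.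
  replace (sin p ^ 2) with (sin p ^ 2 * (cos q ^ 2 + sin q ^ 2)) by (rewrite hq; ring).
  replace (sin q ^ 2) with (sin q ^ 2 * (cos p ^ 2 + sin p ^ 2)) at 2 by (rewrite hp; ring).
  ring.
Qed.

(* Heron's formula for the inscribed triangle together with abc = 4 R area, R = 1. *)
Lemma s2_heron t1 t2 t3 :
  let A := s2 t1 t2 in let B := s2 t2 t3 in let C := s2 t1 t3 in
  2 * (A * B + B * C + C * A) - (A ^ 2 + B ^ 2 + C ^ 2) = 4 * A * B * C.
Proof.
  intros A B C.
  assert (hcos : cos ((t2 - t3) / 2) ^ 2 = 1 - B)
    by (unfold B, s2; pose proof (cos2_add_sin2 ((t2 - t3) / 2)); lra).
  assert (hsq : (A + C - B) ^ 2 = 4 * A * C * (1 - B)).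
  { rewrite <- hcos. unfold A, B, C. rewrite <- sin_sin_cos_half. unfold s2. ring. }
  lra.
Qed.

Lemma csc_weight a b c :
  sin ((a - b) / 2) <> 0 -> sin ((a - c) / 2) <> 0 ->
  cos ((b - c) / 2) * csc ((a - b) / 2) * csc ((a - c) / 2)
  = (s2 a b + s2 a c - s2 b c) / (2 * s2 a b * s2 a c).
Proof.
  intros hab hac. rewrite <- sin_sin_cos_half. unfold csc, s2. field. auto.
Qed.

Lemma yfun_eq t1 t2 t3 c1 c2 c3 :
  yfun t1 t2 t3 c1 c2 c3 = c1 * c2 * s2 t1 t2 + c1 * c3 * s2 t1 t3 + c2 * c3 * s2 t2 t3.
Proof. unfold yfun. rewrite (s2_sym t2 t1), (s2_sym t3 t1), (s2_sym t3 t2). ring. Qed.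

Lemma yfun_swap12 t1 t2 t3 c1 c2 c3 :
  yfun t1 t2 t3 c1 c2 c3 = yfun t2 t1 t3 c2 c1 c3.
Proof. rewrite !yfun_eq, (s2_sym t2 t1). ring. Qed.

Lemma yfun_swap13 t1 t2 t3 c1 c2 c3 :
  yfun t1 t2 t3 c1 c2 c3 = yfun t3 t2 t1 c3 c2 c1.
Proof. rewrite !yfun_eq, (s2_sym t3 t1), (s2_sym t3 t2), (s2_sym t2 t1). ring. Qed.

(* Lagrange's identity for the unit vectors (cos t_i, sin t_i); the weights may have any sign. *)
Lemma yfun_lagrange t1 t2 t3 w1 w2 w3 :
  4 * yfun t1 t2 t3 w1 w2 w3
  = (w1 + w2 + w3) ^ 2
    - ((w1 * cos t1 + w2 * cos t2 + w3 * cos t3) ^ 2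
       + (w1 * sin t1 + w2 * sin t2 + w3 * sin t3) ^ 2).
Proof.
  rewrite yfun_eq, !s2_cos_sin.
  transitivity ((w1 + w2 + w3) ^ 2
    - (w1 ^ 2 * (cos t1 ^ 2 + sin t1 ^ 2) + w2 ^ 2 * (cos t2 ^ 2 + sin t2 ^ 2)
       + w3 ^ 2 * (cos t3 ^ 2 + sin t3 ^ 2))
    - (2 * w1 * w2 * (cos t1 * cos t2 + sin t1 * sin t2)
       + 2 * w1 * w3 * (cos t1 * cos t3 + sin t1 * sin t3)
       + 2 * w2 * w3 * (cos t2 * cos t3 + sin t2 * sin t3))).
  - rewrite !cos2_add_sin2. field.
  - ring.
Qed.

Lemma sum_sq_ge0 x y : 0 <= x ^ 2 + y ^ 2.
Proof. apply Rplus_le_le_0_compat; apply pow2_ge_0. Qed.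

Lemma yfun_le_quarter t1 t2 t3 c1 c2 c3 :
  simplex3 c1 c2 c3 -> yfun t1 t2 t3 c1 c2 c3 <= 1 / 4.
Proof.
  intros (_ & _ & _ & hs).
  pose proof (yfun_lagrange t1 t2 t3 c1 c2 c3) as e. rewrite hs in e.
  pose proof (sum_sq_ge0 (c1 * cos t1 + c2 * cos t2 + c3 * cos t3)
                         (c1 * sin t1 + c2 * sin t2 + c3 * sin t3)).
  lra.
Qed.

Lemma yfun_le_obtuse t1 t2 t3 c1 c2 c3 :
  simplex3 c1 c2 c3 -> s2 t1 t2 + s2 t1 t3 <= s2 t2 t3 ->
  yfun t1 t2 t3 c1 c2 c3 <= s2 t2 t3 / 4.
Proof.
  intros (h1 & _ & _ & hs) hob.
  pose proof (yfun_lagrange t1 t2 t3 c1 (c2 - 1 / 2) (c3 - 1 / 2)) as e.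
  replace (c1 + (c2 - 1 / 2) + (c3 - 1 / 2)) with 0 in e by lra.
  pose proof (sum_sq_ge0 (c1 * cos t1 + (c2 - 1 / 2) * cos t2 + (c3 - 1 / 2) * cos t3)
                         (c1 * sin t1 + (c2 - 1 / 2) * sin t2 + (c3 - 1 / 2) * sin t3)).
  assert (0 <= c1 * (s2 t2 t3 - s2 t1 t2 - s2 t1 t3)) by (apply Rmult_le_pos; lra).
  rewrite yfun_eq in *.
  assert (c3 = 1 - c1 - c2) by lra. subst c3.
  lra.
Qed.

Lemma yfun_attains_max_s2 t1 t2 t3 :
  exists c1 c2 c3, simplex3 c1 c2 c3 /\
    yfun t1 t2 t3 c1 c2 c3 = 1 / 4 * Rmax (s2 t1 t2) (Rmax (s2 t1 t3) (s2 t2 t3)).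
Proof.
  unfold Rmax.
  destruct (Rle_dec (s2 t1 t3) (s2 t2 t3)); destruct (Rle_dec (s2 t1 t2) _).
  - exists 0, (1 / 2), (1 / 2). rewrite yfun_eq. unfold simplex3. split; [lra | field].
  - exists (1 / 2), (1 / 2), 0. rewrite yfun_eq. unfold simplex3. split; [lra | field].
  - exists (1 / 2), 0, (1 / 2). rewrite yfun_eq. unfold simplex3. split; [lra | field].
  - exists (1 / 2), (1 / 2), 0. rewrite yfun_eq. unfold simplex3. split; [lra | field].
Qed.

Lemma Rmult3_pos_inv x y z :
  0 <= x -> 0 <= y -> 0 <= z -> x * y * z > 0 -> 0 < x /\ 0 < y /\ 0 < z.
Proof.
  intros hx hy hz h.
  repeat split; apply Rnot_le_lt; intro; [assert (x = 0) | assert (y = 0) | assert (z = 0)];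
    try lra; subst; lra.
Qed.

Lemma circumcentre_weights A B C :
  0 < A -> 0 < B -> 0 < C ->
  2 * (A * B + B * C + C * A) - (A ^ 2 + B ^ 2 + C ^ 2) = 4 * A * B * C ->
  let w1 := (A + C - B) / (2 * A * C) / 2 in
  let w2 := (A + B - C) / (2 * A * B) / 2 in
  let w3 := (C + B - A) / (2 * C * B) / 2 in
  w1 + w2 + w3 = 1 /\ w1 * w2 * A + w1 * w3 * C + w2 * w3 * B = 1 / 4.
Proof.
  intros hA hB hC heron w1 w2 w3. unfold w1, w2, w3. split.
  - transitivity ((2 * (A * B + B * C + C * A) - (A ^ 2 + B ^ 2 + C ^ 2)) / (4 * A * B * C)).
    + field. lra.
    + rewrite heron. field. lra.
  - transitivity ((2 * (A * B + B * C + C * A) - (A ^ 2 + B ^ 2 + C ^ 2)) / (16 * A * B * C)).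
    + field. lra.
    + rewrite heron. field. lra.
Qed.

Lemma case_i_attains_quarter t1 t2 t3 :
  case_i t1 t2 t3 ->
  exists c1 c2 c3, simplex3 c1 c2 c3 /\ yfun t1 t2 t3 c1 c2 c3 = 1 / 4.
Proof.
  intros (hprod & v1 & v2 & v3).
  rewrite (s2_sym t3 t1) in hprod.
  destruct (Rmult3_pos_inv _ _ _ (s2_ge0 t1 t2) (s2_ge0 t2 t3) (s2_ge0 t1 t3) hprod)
    as (hA & hB & hC).
  rewrite csc_weight in v1, v2, v3; try (apply s2_pos_sin_neq0; rewrite s2_sym; lra);
    try (apply s2_pos_sin_neq0; lra).
  rewrite (s2_sym t2 t1), (s2_sym t3 t1), (s2_sym t3 t2) in *.
  destruct (circumcentre_weights _ _ _ hA hB hC (s2_heron t1 t2 t3)) as [hsum hval].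
  set (A := s2 t1 t2) in *. set (B := s2 t2 t3) in *. set (C := s2 t1 t3) in *.
  exists ((A + C - B) / (2 * A * C) / 2), ((A + B - C) / (2 * A * B) / 2),
    ((C + B - A) / (2 * C * B) / 2).
  split.
  - unfold simplex3. lra.
  - rewrite yfun_eq. fold A B C. rewrite <- hval. ring.
Qed.

Lemma acute_case_i t1 t2 t3 :
  s2 t2 t3 < s2 t1 t2 + s2 t1 t3 -> s2 t1 t3 < s2 t1 t2 + s2 t2 t3 ->
  s2 t1 t2 < s2 t1 t3 + s2 t2 t3 -> case_i t1 t2 t3.
Proof.
  intros h1 h2 h3.
  assert (hA : 0 < s2 t1 t2) by lra.
  assert (hB : 0 < s2 t2 t3) by lra.
  assert (hC : 0 < s2 t1 t3) by lra.
  unfold case_i. rewrite (s2_sym t3 t1).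
  rewrite !csc_weight; try (apply s2_pos_sin_neq0; rewrite s2_sym; lra);
    try (apply s2_pos_sin_neq0; lra).
  rewrite (s2_sym t2 t1), (s2_sym t3 t1), (s2_sym t3 t2).
  split; [apply Rmult_lt_0_compat; [apply Rmult_lt_0_compat |]; lra |].
  repeat split; apply Rlt_le, Rdiv_lt_0_compat; try lra;
    (apply Rmult_lt_0_compat; [apply Rmult_lt_0_compat |]; lra).
Qed.

Lemma not_case_i_obtuse t1 t2 t3 :
  ~ case_i t1 t2 t3 ->
  s2 t1 t2 + s2 t1 t3 <= s2 t2 t3 \/ s2 t1 t2 + s2 t2 t3 <= s2 t1 t3 \/
  s2 t1 t3 + s2 t2 t3 <= s2 t1 t2.
Proof.
  intros hn.
  destruct (Rle_dec (s2 t1 t2 + s2 t1 t3) (s2 t2 t3)); [now left |].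
  destruct (Rle_dec (s2 t1 t2 + s2 t2 t3) (s2 t1 t3)); [now right; left |].
  destruct (Rle_dec (s2 t1 t3 + s2 t2 t3) (s2 t1 t2)); [now right; right |].
  exfalso. apply hn, acute_case_i; lra.
Qed.

Lemma yfun_le_max_s2_obtuse t1 t2 t3 c1 c2 c3 :
  simplex3 c1 c2 c3 ->
  s2 t1 t2 + s2 t1 t3 <= s2 t2 t3 \/ s2 t1 t2 + s2 t2 t3 <= s2 t1 t3 \/
  s2 t1 t3 + s2 t2 t3 <= s2 t1 t2 ->
  yfun t1 t2 t3 c1 c2 c3 <= 1 / 4 * Rmax (s2 t1 t2) (Rmax (s2 t1 t3) (s2 t2 t3)).
Proof.
  intros hs hob.
  pose proof (Rmax_l (s2 t1 t2) (Rmax (s2 t1 t3) (s2 t2 t3))).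
  pose proof (Rmax_r (s2 t1 t2) (Rmax (s2 t1 t3) (s2 t2 t3))).
  pose proof (Rmax_l (s2 t1 t3) (s2 t2 t3)). pose proof (Rmax_r (s2 t1 t3) (s2 t2 t3)).
  destruct hob as [hob | [hob | hob]].
  - pose proof (yfun_le_obtuse t1 t2 t3 c1 c2 c3 hs hob). lra.
  - rewrite yfun_swap12, (s2_sym t1 t2) in *.
    assert (hs' : simplex3 c2 c1 c3) by (unfold simplex3 in *; lra).
    pose proof (yfun_le_obtuse t2 t1 t3 c2 c1 c3 hs' hob). lra.
  - rewrite yfun_swap13, (s2_sym t1 t3), (s2_sym t2 t3), (s2_sym t1 t2) in *.
    assert (hs' : simplex3 c3 c2 c1) by (unfold simplex3 in *; lra).
    assert (hob' : s2 t3 t2 + s2 t3 t1 <= s2 t2 t1) by lra.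
    pose proof (yfun_le_obtuse t3 t2 t1 c3 c2 c1 hs' hob'). lra.
Qed.

Theorem lemma6 (t1 t2 t3 : R) :
  (case_i t1 t2 t3 -> is_max_y t1 t2 t3 (1 / 4)) /\
  (~ case_i t1 t2 t3 ->
     is_max_y t1 t2 t3
       (1 / 4 * Rmax (s2 t1 t2) (Rmax (s2 t1 t3) (s2 t2 t3)))).
Proof.
  split; intros hcase; split.
  - exact (case_i_attains_quarter t1 t2 t3 hcase).
  - intros c1 c2 c3. apply yfun_le_quarter.
  - apply yfun_attains_max_s2.
  - intros c1 c2 c3 hs.
    exact (yfun_le_max_s2_obtuse t1 t2 t3 c1 c2 c3 hs (not_case_i_obtuse t1 t2 t3 hcase)).
Qed.
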